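(* Let $T$ be a densely defined symmetric operator in a Hilbert space $\mathcal{H}$ with scalar product $(\cdot,\cdot)$, let $g_1,\dots,g_n\in\mathcal{H}$ and set $\mathcal{D}_0:=\{u\in\mathcal{D}(T):(u,g_j)=0,\ j=1,\dots,n\}$. If $x\in\mathcal{H}$ is such that the map $\mathcal{D}_0\to\mathbb{C}$, $u\mapsto(Tu,x)$, is bounded, then $x\in\mathcal{D}(T^* )$. *)

From HB Require Import structures.
From mathcomp Require Import all_boot all_order all_algebra.
From mathcomp Require Import reals.
From mathcomp Require Import complex.
Set Implicit Arguments. Unset Strict Implicit. Unset Printing Implicit Defensive.
Import Order.TTheory GRing.Theory Num.Theory.
Local Open Scope ring_scope.

Section Hilbert.
Variable R : realType.
Local Notation C := (R[i]).
Variable V : lmodType C.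

Record inner_product (ip : V -> V -> C) : Prop := InnerProduct {
  ip_linear_l : forall (a : C) (x y z : V), ip (a *: x + y) z = a * ip x z + ip y z;
  ip_conj_sym : forall x y : V, ip y x = Num.conj (ip x y);
  ip_ge0 : forall x : V, 0 <= ip x x;
  ip_eq0 : forall x : V, ip x x = 0 -> x = 0 }.

(* the induced norm ||x|| = sqrt((x,x)), a nonnegative real number inside C *)
Definition ip_norm (ip : V -> V -> C) (x : V) : C := sqrtC (ip x x).

Definition ip_cauchy (ip : V -> V -> C) (s : nat -> V) : Prop :=
  forall eps : C, 0 < eps -> exists N : nat, forall m n : nat,
    (N <= m)%N -> (N <= n)%N -> ip_norm ip (s m - s n) < eps.

Definition ip_converges (ip : V -> V -> C) (s : nat -> V) (l : V) : Prop :=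
  forall eps : C, 0 < eps -> exists N : nat, forall n : nat,
    (N <= n)%N -> ip_norm ip (s n - l) < eps.

Definition hilbert_space (ip : V -> V -> C) : Prop :=
  inner_product ip /\
  forall s : nat -> V, ip_cauchy ip s -> exists l : V, ip_converges ip s l.

(* An (unbounded) operator T with domain D: D is a linear subspace and
   T is linear on D (values of T outside D are irrelevant). *)
Definition lin_operator (D : V -> Prop) (T : V -> V) : Prop :=
  D 0 /\
  (forall (a : C) (u v : V), D u -> D v -> D (a *: u + v)) /\
  (forall (a : C) (u v : V), D u -> D v -> T (a *: u + v) = a *: T u + T v).

Definition densely_defined (ip : V -> V -> C) (D : V -> Prop) : Prop :=
  forall (x : V) (eps : C), 0 < eps -> exists u : V, D u /\ ip_norm ip (x - u) < eps.

Definition symmetric_op (ip : V -> V -> C) (D : V -> Prop) (T : V -> V) : Prop :=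
  forall u v : V, D u -> D v -> ip (T u) v = ip u (T v).

Definition adjoint_dom (ip : V -> V -> C) (D : V -> Prop) (T : V -> V) (x : V) : Prop :=
  exists y : V, forall u : V, D u -> ip (T u) x = ip u y.

End Hilbert.

(* The functional [phi u := (T u, x)] is bounded on D_0, a subspace of finite
   codimension in D(T).  Adding back one direction [w] with [(w, g) = 1] at a
   time keeps it bounded, since [u = (u - (u, g) w) + (u, g) w] and
   [|(u, g)| <= ||u|| ||g||].  A functional bounded on D(T) is represented by a
   vector (Riesz): the vector [v] of minimal norm in the closure of
   [{u in D(T) | phi u = 1}] is the limit of a minimizing sequence, Cauchy by
   the parallelogram law, and is orthogonal to the kernel of [phi]; hence
   [phi u = (u, v / ||v||^2)], i.e. [x] is in the domain of the adjoint. *)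

From mathcomp Require Import all_boot all_order all_algebra.
From mathcomp Require Import reals boolp classical_sets.
From mathcomp Require Import complex.
From mathcomp Require Import ring lra.
Import Order.TTheory GRing.Theory Num.Theory.
Local Open Scope complex_scope.
Local Open Scope ring_scope.
Set Implicit Arguments. Unset Strict Implicit. Unset Printing Implicit Defensive.

Section ComplexNumbers.
Variable R : realType.
Local Notation C := (R[i]).

Lemma real_complexD (r s : R) : (r + s)%:C = r%:C + s%:C.
Proof. exact: rmorphD. Qed.

Lemma real_complexM (r s : R) : (r * s)%:C = r%:C * s%:C.
Proof. exact: rmorphM. Qed.

Lemma real_complexB (r s : R) : (r - s)%:C = r%:C - s%:C.
Proof. exact: rmorphB. Qed.

Lemma real_complexV (r : R) : (r^-1)%:C = r%:C^-1.
Proof. exact: fmorphV. Qed.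

(* The order of [R[i]] only compares numbers with equal imaginary parts. *)
Lemma ge0_complexE (c : C) : 0 <= c -> c = (complex.Re c)%:C.
Proof. by move/ger0_Im; case: c => a b /= ->. Qed.

Definition sqmod (z : C) : R := complex.Re z ^+ 2 + complex.Im z ^+ 2.

Lemma sqr_normcE z : `|z| ^+ 2 = (sqmod z)%:C.
Proof. by rewrite -add_Re2_Im2. Qed.

Lemma sqmodE z : (sqmod z)%:C = z * z^*.
Proof. by rewrite -sqr_normcE normCK. Qed.

Lemma conj_real_complex (r : R) : (r%:C)^* = r%:C.
Proof. by rewrite conj_Creal // complex_real. Qed.

Lemma conj_div_real z (r : R) : (z / r%:C)^* = z^* / r%:C.
Proof. by rewrite rmorphM fmorphV [X in _ / X]conj_real_complex. Qed.

Lemma sqmod_ge0 z : 0 <= sqmod z.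
Proof. rewrite /sqmod; nra. Qed.

Lemma sqmod_eq0 z : sqmod z = 0 -> z = 0.
Proof.
case: z => a b; rewrite /sqmod /= => h.
have -> : a = 0 by nra.
by have -> : b = 0 by nra.
Qed.

Lemma sqmod_real (r : R) : sqmod r%:C = r ^+ 2.
Proof. by rewrite /sqmod /=; ring. Qed.

Lemma sqmod0 : sqmod 0 = 0.
Proof. by rewrite /sqmod /= expr0n addr0. Qed.

Lemma sqmod1 : sqmod 1 = 1.
Proof. by rewrite /sqmod /= expr1n expr0n addr0. Qed.

Lemma sqmodM z w : sqmod (z * w) = sqmod z * sqmod w.
Proof. by case: z w => a b [c d]; rewrite /sqmod /=; ring. Qed.

Lemma sqmodN z : sqmod (- z) = sqmod z.
Proof. by case: z => a b; rewrite /sqmod /=; ring. Qed.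

Lemma sqmodD_le z w : sqmod (z + w) <= 2 * sqmod z + 2 * sqmod w.
Proof.
case: z w => a b [c d]; rewrite /sqmod /=.
have := sqr_ge0 (a - c); have := sqr_ge0 (b - d); nra.
Qed.

End ComplexNumbers.

Section InnerProduct.
Variable R : realType.
Local Notation C := (R[i]).
Variables (V : lmodType C) (ip : V -> V -> C).
Hypothesis ipH : inner_product ip.

Lemma ipC x y : ip y x = (ip x y)^*.
Proof. exact: (ip_conj_sym ipH). Qed.

Lemma ipDl x y z : ip (x + y) z = ip x z + ip y z.
Proof. by rewrite -{1}[x]scale1r (ip_linear_l ipH) mul1r. Qed.

Lemma ip0l z : ip 0 z = 0.
Proof. by apply: (addrI (ip 0 z)); rewrite -ipDl !addr0. Qed.

Lemma ipZl a x z : ip (a *: x) z = a * ip x z.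
Proof. by rewrite -[a *: x]addr0 (ip_linear_l ipH) ip0l addr0. Qed.

Lemma ipNl x z : ip (- x) z = - ip x z.
Proof. by rewrite -scaleN1r ipZl mulN1r. Qed.

Lemma ipBl x y z : ip (x - y) z = ip x z - ip y z.
Proof. by rewrite ipDl ipNl. Qed.

Lemma ipDr x y z : ip z (x + y) = ip z x + ip z y.
Proof. by rewrite ipC ipDl rmorphD (ipC x z) (ipC y z). Qed.

Lemma ipZr a x z : ip z (a *: x) = a^* * ip z x.
Proof. by rewrite ipC ipZl rmorphM (ipC x z). Qed.

Lemma ip0r z : ip z 0 = 0.
Proof. by rewrite ipC ip0l rmorph0. Qed.

Lemma ipBr x y z : ip z (x - y) = ip z x - ip z y.
Proof. by rewrite -scaleN1r ipDr ipZr rmorphN1 mulN1r. Qed.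

Definition sqnorm (u : V) : R := complex.Re (ip u u).

Lemma ip_selfE u : ip u u = (sqnorm u)%:C.
Proof. exact/ge0_complexE/(ip_ge0 ipH). Qed.

Lemma sqnorm_ge0 u : 0 <= sqnorm u.
Proof. by rewrite -ler0c -ip_selfE (ip_ge0 ipH). Qed.

Lemma sqnorm_eq0 u : sqnorm u = 0 -> u = 0.
Proof. by move=> h; apply: (ip_eq0 ipH); rewrite ip_selfE h. Qed.

Lemma sqnorm0 : sqnorm 0 = 0.
Proof. by rewrite /sqnorm ip0l. Qed.

Lemma sqnormZ a u : sqnorm (a *: u) = sqmod a * sqnorm u.
Proof. by apply: (@complexI R); rewrite real_complexM -!ip_selfE sqmodE ipZl ipZr; ring. Qed.

Lemma parallelogram u w :
  sqnorm (u + w) + sqnorm (u - w) = 2 * sqnorm u + 2 * sqnorm w.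
Proof.
apply: (@complexI R); rewrite !real_complexD !real_complexM -!ip_selfE rmorph_nat.
by rewrite !ipBl !ipBr !ipDl !ipDr; ring.
Qed.

Lemma sqnormD_le u w : sqnorm (u + w) <= 2 * sqnorm u + 2 * sqnorm w.
Proof. by have := parallelogram u w; have := sqnorm_ge0 (u - w); lra. Qed.

Lemma sqnorm_sub_proj a b : sqnorm b != 0 ->
  sqnorm (a - (ip a b / ip b b) *: b) = sqnorm a - sqmod (ip a b) / sqnorm b.
Proof.
move=> nb0; have nbC : (sqnorm b)%:C != 0 by rewrite (inj_eq (@complexI R)).
apply: (@complexI R).
rewrite real_complexB real_complexM real_complexV sqmodE -!ip_selfE.
rewrite !ipBl !ipBr !ipZl !ipZr (ipC a b) !ip_selfE.
by rewrite conj_div_real; field.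
Qed.

Lemma cauchy_schwarz a b : sqmod (ip a b) <= sqnorm a * sqnorm b.
Proof.
have [nb0|nb0] := eqVneq (sqnorm b) 0.
  by rewrite (sqnorm_eq0 nb0) ip0r sqmod0 mulr_ge0 // sqnorm_ge0.
have := sqnorm_ge0 (a - (ip a b / ip b b) *: b); rewrite sqnorm_sub_proj //.
by rewrite subr_ge0 ler_pdivrMr // lt0r nb0 sqnorm_ge0.
Qed.

Lemma sqmod_ip_le_of_near_min a b (d : R) :
  (forall t : C, sqnorm a - d <= sqnorm (a + t *: b)) ->
  sqmod (ip a b) <= d * sqnorm b.
Proof.
move=> near_min; have [nb0|nb0] := eqVneq (sqnorm b) 0.
  by rewrite (sqnorm_eq0 nb0) ip0r sqnorm0 mulr0 sqmod0.
have := near_min (- (ip a b / ip b b)); rewrite scaleNr sqnorm_sub_proj //.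
by rewrite -ler_pdivrMr ?lt0r ?nb0 ?sqnorm_ge0 // lerD2l lerN2.
Qed.

End InnerProduct.

Lemma ler0_of_le_mul_eps (R : realFieldType) (z c : R) : 0 <= c ->
  (forall e, 0 < e -> z <= c * e) -> z <= 0.
Proof.
move=> c0 le_z; apply/ler_addgt0Pr => e e0; rewrite add0r.
have c1 : 0 < c + 1 by lra.
have := le_z _ (divr_gt0 e0 c1); rewrite mulrA ler_pdivlMr //; nra.
Qed.

Lemma inv_succ_small (R : archiRealFieldType) (e : R) : 0 < e ->
  exists K, forall k, (K <= k)%N -> (k.+1%:R : R)^-1 < e.
Proof.
move=> e0; exists (Num.Def.archi_bound e^-1) => k le_Kk.
have e_inv_ge0 : 0 <= e^-1 by rewrite invr_ge0 ltW.
rewrite invf_plt ?posrE ?ltr0n //; apply: (lt_le_trans (archi_boundP e_inv_ge0)).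
by rewrite ler_nat ltnW.
Qed.

Lemma minimizing_sequence (R : realType) (T : Type) (S : T -> Prop) (f : T -> R) :
  (forall t, 0 <= f t) -> (exists t, S t) ->
  exists (d : R) (ts : nat -> T),
    [/\ forall t, S t -> d <= f t, forall k, S (ts k) &
        forall e, 0 < e -> exists K, forall k, (K <= k)%N -> f (ts k) < d + e].
Proof.
move=> f_ge0 [t0 St0].
pose E : set R := fun r => exists t, S t /\ r = f t.
have E_lb : has_lbound E by exists 0 => _ [t [_ ->]]; apply: f_ge0.
have E_nonempty : (E !=set0)%classic by exists (f t0), t0.
have near_inf k : exists t, S t /\ f t < inf E + (k.+1%:R)^-1.
  have lt_inf : inf E < inf E + (k.+1%:R)^-1 by rewrite ltrDl invr_gt0 ltr0n.
  by have [_ [t [St ->]] lt_ft] := inf_lt E_nonempty lt_inf; exists t.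
have [ts ts_near] := choice near_inf.
exists (inf E), ts; split=> [t St | k | e e0]; first by apply: ge_inf => //; exists t.
  by case: (ts_near k).
have [K small] := inv_succ_small e0.
exists K => k le_Kk; apply: (lt_trans (proj2 (ts_near k))).
by rewrite ltrD2l small.
Qed.

Definition subspace (R : realType) (V : lmodType R[i]) (P : V -> Prop) :=
  P 0 /\ forall a u w, P u -> P w -> P (a *: u + w).

Lemma subspaceZ (R : realType) (V : lmodType R[i]) (P : V -> Prop) a u :
  subspace P -> P u -> P (a *: u).
Proof. by case=> P0 PC Pu; rewrite -[_ *: u]addr0; apply: PC. Qed.

Lemma subspaceD (R : realType) (V : lmodType R[i]) (P : V -> Prop) u w :
  subspace P -> P u -> P w -> P (u + w).
Proof. by case=> _ PC Pu Pw; rewrite -[u]scale1r; apply: PC. Qed.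

Section LinearFunctional.
Variable R : realType.
Local Notation C := (R[i]).
Variables (V : lmodType C) (ip : V -> V -> C).
Hypothesis ipH : inner_product ip.
Local Notation sqnorm := (sqnorm ip).
Variable phi : V -> C.

Definition linear_on (P : V -> Prop) :=
  forall a u w, P u -> P w -> phi (a *: u + w) = a * phi u + phi w.

(* Stated with squares to avoid square roots: [|phi u| <= sqrt K * ||u||]. *)
Definition bounded_on (P : V -> Prop) :=
  exists K : R, 0 <= K /\ forall u, P u -> sqmod (phi u) <= K * sqnorm u.

Section LinearOnSubspace.
Variable P : V -> Prop.
Hypotheses (P_sub : subspace P) (phi_lin : linear_on P).

Lemma linear_on0 : phi 0 = 0.
Proof.
have P0 := P_sub.1; have := phi_lin 1 P0 P0.
by rewrite scale1r addr0 mul1r => /eqP; rewrite addrC -subr_eq subrr => /eqP.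
Qed.

Lemma linear_onZ a u : P u -> phi (a *: u) = a * phi u.
Proof. by move=> Pu; rewrite -[_ *: u]addr0 phi_lin ?linear_on0 ?addr0 //; case: P_sub. Qed.

Lemma linear_onD u w : P u -> P w -> phi (u + w) = phi u + phi w.
Proof. by move=> Pu Pw; rewrite -{1}[u]scale1r phi_lin // mul1r. Qed.

End LinearOnSubspace.

Lemma linear_on_sub P Q : (forall u, Q u -> P u) -> linear_on P -> linear_on Q.
Proof. by move=> QP phi_lin a u w /QP Pu /QP Pw; apply: phi_lin. Qed.

Lemma bounded_on_sub P Q : (forall u, Q u -> P u) -> bounded_on P -> bounded_on Q.
Proof. by move=> QP [K [K0 phi_bd]]; exists K; split=> // u /QP; apply: phi_bd. Qed.

Lemma subspace_ker_ip P g : subspace P -> subspace (fun u => P u /\ ip u g = 0).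
Proof.
case=> P0 PC; split; first by rewrite ip0l.
move=> a u w [Pu ug] [Pw wg]; split; first exact: PC.
by rewrite (ip_linear_l ipH) ug wg mulr0 addr0.
Qed.

Lemma bounded_on_ker_ip P g : subspace P -> linear_on P ->
  bounded_on (fun u => P u /\ ip u g = 0) -> bounded_on P.
Proof.
move=> [P0 PC] phi_lin [K [K0 phi_bd]].
have [[w [Pw wg]]|no_w] := pselect (exists w, P w /\ ip w g != 0); last first.
  exists K; split=> // u Pu; apply: phi_bd; split=> //.
  by apply: contra_notP no_w => /eqP ug; exists u.
pose w1 := (ip w g)^-1 *: w.
have Pw1 : P w1 by rewrite /w1 -[_ *: w]addr0; apply: PC.
have w1g : ip w1 g = 1 by rewrite ipZl // mulVf.
set Ng := sqnorm g; set Nw := sqnorm w1; set Mw := sqmod (phi w1).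
have Ng0 := sqnorm_ge0 ipH g; have Nw0 := sqnorm_ge0 ipH w1; have Mw0 := sqmod_ge0 (phi w1).
exists (4 * K * Ng * Nw + 4 * K + 2 * Ng * Mw); split.
  by rewrite !addr_ge0 // !mulr_ge0.
move=> u Pu; set a := ip u g; set u' := (- a) *: w1 + u.
have Pu' : P u' by apply: PC.
have u'g : ip u' g = 0 by rewrite (ip_linear_l ipH) w1g mulr1 addNr.
have phi_u : phi u = phi u' + a * phi w1 by rewrite phi_lin //; ring.
have phi_u_le : sqmod (phi u) <= 2 * sqmod (phi u') + 2 * (sqmod a * Mw).
  by rewrite phi_u -sqmodM sqmodD_le.
have u'_le : sqnorm u' <= 2 * (sqmod a * Nw) + 2 * sqnorm u.
  by rewrite -sqmodN -(sqnormZ ipH) sqnormD_le.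
have a_le : sqmod a <= sqnorm u * Ng := cauchy_schwarz ipH u g.
have := phi_bd u' (conj Pu' u'g).
have a0 := sqmod_ge0 a; have Nu0 := sqnorm_ge0 ipH u.
have : K * sqnorm u' <= K * (2 * (sqmod a * Nw) + 2 * sqnorm u) by rewrite ler_wpM2l.
have : K * (sqmod a * Nw) <= K * (sqnorm u * Ng * Nw) by rewrite ler_wpM2l // ler_wpM2r.
have : sqmod a * Mw <= sqnorm u * Ng * Mw by rewrite ler_wpM2r.
nra.
Qed.

Lemma bounded_on_ker_ips P (gs : seq V) : subspace P -> linear_on P ->
  bounded_on (fun u => P u /\ forall g, g \in gs -> ip u g = 0) -> bounded_on P.
Proof.
elim: gs P => [|g gs IH] P P_sub phi_lin phi_bd.
  by apply: bounded_on_sub phi_bd => u Pu; split=> // g; rewrite in_nil.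
apply: (bounded_on_ker_ip (g := g) P_sub phi_lin).
apply: IH; first exact: subspace_ker_ip.
  by apply: linear_on_sub phi_lin => u [].
apply: bounded_on_sub phi_bd => u [[Pu ug] ugs]; split=> // h.
by rewrite in_cons => /orP [/eqP ->|/ugs].
Qed.

End LinearFunctional.

Section RieszRepresentation.
Variable R : realType.
Local Notation C := (R[i]).
Variables (V : lmodType C) (ip : V -> V -> C).
Hypothesis ipH : inner_product ip.
Local Notation sqnorm := (sqnorm ip).

Definition sqnorm_cvg (s : nat -> V) (l : V) :=
  forall e : R, 0 < e -> exists K, forall k, (K <= k)%N -> sqnorm (s k - l) < e.

Definition sqnorm_complete := forall s : nat -> V,
  (forall e : R, 0 < e -> exists K, forall j k, (K <= j)%N -> (K <= k)%N ->
     sqnorm (s j - s k) < e) ->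
  exists l, sqnorm_cvg s l.

Variables (phi : V -> C) (P : V -> Prop).
Hypotheses (P_sub : subspace P) (phi_lin : linear_on phi P).

Let S v := P v /\ phi v = 1.

Section MinimalNorm.
Variable d : R.
Hypothesis d_lb : forall w, S w -> d <= sqnorm w.

Lemma sqnorm_sub_le_min v w : S v -> S w ->
  sqnorm (v - w) <= 2 * (sqnorm v - d) + 2 * (sqnorm w - d).
Proof.
move=> [Pv phi_v] [Pw phi_w].
have S_mid : S ((2 : C)^-1 *: (v + w)).
  split; first by apply: subspaceZ => //; apply: subspaceD.
  rewrite (linear_onZ P_sub phi_lin) ?(linear_onD phi_lin) ?phi_v ?phi_w //.
    by rewrite mulr2n mulVf // -mulr2n pnatr_eq0.
  exact: subspaceD.
have := d_lb S_mid; rewrite (sqnormZ ipH).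
have -> : sqmod (2 : C)^-1 = 4^-1.
  have -> : (2 : C) = (2 : R)%:C by rewrite rmorph_nat.
  by rewrite -real_complexV sqmod_real; field.
have := parallelogram ipH v w; lra.
Qed.

Lemma sqmod_ip_ker_le v u : S v -> P u -> phi u = 0 ->
  sqmod (ip v u) <= (sqnorm v - d) * sqnorm u.
Proof.
move=> [Pv phi_v] Pu phi_u; apply: sqmod_ip_le_of_near_min => // t.
suff : d <= sqnorm (v + t *: u) by lra.
apply: d_lb; split; first by apply: subspaceD => //; apply: subspaceZ.
rewrite (linear_onD phi_lin) ?(linear_onZ P_sub phi_lin) ?phi_v ?phi_u //.
  by rewrite mulr0 addr0.
exact: subspaceZ.
Qed.

(* [v] is the minimal-norm vector of the closure of [S], the limit of a
   minimizing sequence. *)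
Section Limit.
Variables (vs : nat -> V) (v : V).
Hypotheses (vsS : forall k, S (vs k)) (vs_cvg : sqnorm_cvg vs v).
Hypothesis vs_min :
  forall e, 0 < e -> exists K, forall k, (K <= k)%N -> sqnorm (vs k) < d + e.

Lemma near_limit e : 0 < e -> exists k, sqnorm (vs k) < d + e /\ sqnorm (vs k - v) < e.
Proof.
move=> e0; have [K1 near_min] := vs_min e0; have [K2 near_v] := vs_cvg e0.
by exists (maxn K1 K2); rewrite near_min ?near_v ?leq_maxl ?leq_maxr.
Qed.

Lemma limit_orth_ker u : P u -> phi u = 0 -> ip u v = 0.
Proof.
move=> Pu phi_u; suff /sqmod_eq0 vu0 : sqmod (ip v u) = 0.
  by rewrite (ipC ipH) vu0 conjC0.
apply/eqP; rewrite eq_le sqmod_ge0 andbT; apply: (@ler0_of_le_mul_eps _ _ (4 * sqnorm u)).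
  by rewrite mulr_ge0 // sqnorm_ge0.
move=> e e0; have [k [near_min near_v]] := near_limit e0.
have Nu0 := sqnorm_ge0 ipH u; have Nk0 := sqnorm_ge0 ipH (vs k - v).
have ker_le := sqmod_ip_ker_le (vsS k) Pu phi_u.
have cs := cauchy_schwarz ipH (vs k - v) u.
have split_v : ip v u = ip (vs k) u - ip (vs k - v) u by rewrite (ipBl ipH); ring.
have := sqmodD_le (ip (vs k) u) (- ip (vs k - v) u); rewrite sqmodN -split_v.
have : (sqnorm (vs k) - d) * sqnorm u <= e * sqnorm u by rewrite ler_wpM2r // ltW // ltrBlDl.
have : sqnorm (vs k - v) * sqnorm u <= e * sqnorm u by rewrite ler_wpM2r // ltW.
lra.
Qed.

Lemma ip_limit_decomp u w : P u -> S w -> ip u v = phi u * ip w v.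
Proof.
move=> Pu [Pw phi_w].
have Pu' : P (- phi u *: w + u) by case: P_sub => _; apply.
have := limit_orth_ker Pu'; rewrite phi_lin // phi_w mulr1 addNr.
rewrite (ip_linear_l ipH) => /(_ erefl) /eqP.
by rewrite addrC addr_eq0 mulNr opprK => /eqP.
Qed.

Lemma ip_S_limit w : S w -> ip w v = (sqnorm v)%:C.
Proof.
move=> Sw; apply/eqP; rewrite -subr_eq0 -(ip_selfE ipH); apply/eqP/sqmod_eq0.
apply/eqP; rewrite eq_le sqmod_ge0 andbT.
apply: (@ler0_of_le_mul_eps _ _ (sqnorm v)); first exact: sqnorm_ge0.
move=> e e0; have [k [_ near_v]] := near_limit e0.
have -> : ip w v - ip v v = ip (vs k - v) v.
  by rewrite (ipBl ipH) (ip_limit_decomp (vsS k).1 Sw) (vsS k).2 mul1r.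
apply: (le_trans (cauchy_schwarz ipH _ _)).
by rewrite mulrC ler_wpM2l ?sqnorm_ge0 ?ltW.
Qed.

Lemma ip_limit u : P u -> ip u v = phi u * (sqnorm v)%:C.
Proof. by move=> Pu; rewrite (ip_limit_decomp Pu (vsS 0)) (ip_S_limit (vsS 0)). Qed.

Lemma limit_sqnorm_neq0 : bounded_on ip phi P -> sqnorm v != 0.
Proof.
move=> [K [K0 phi_bd]]; apply/negP => /eqP /(sqnorm_eq0 ipH) v0.
have K1 : 0 < K + 1 by lra.
have K1_inv : 0 < (K + 1)^-1 by rewrite invr_gt0.
have [k [_ near_v]] := near_limit K1_inv.
rewrite v0 subr0 in near_v.
have one_le : 1 <= K * sqnorm (vs k).
  by have := phi_bd _ (vsS k).1; rewrite (vsS k).2 sqmod1.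
have : K * sqnorm (vs k) <= K * (K + 1)^-1 by rewrite ler_wpM2l // ltW.
have : K * (K + 1)^-1 < 1 by rewrite ltr_pdivrMr //; lra.
lra.
Qed.

Lemma limit_represents : bounded_on ip phi P ->
  forall u, P u -> phi u = ip u ((sqnorm v)^-1%:C *: v).
Proof.
move=> phi_bd u Pu; have Nv0 : (sqnorm v)%:C != 0.
  by rewrite (inj_eq (@complexI R)) limit_sqnorm_neq0.
by rewrite (ipZr ipH) conj_real_complex ip_limit // real_complexV; field.
Qed.

End Limit.
End MinimalNorm.

Lemma riesz_representation : sqnorm_complete -> bounded_on ip phi P ->
  exists y, forall u, P u -> phi u = ip u y.
Proof.
move=> complete phi_bd.
have [[u0 [Pu0 phi_u0]]|phi_eq0] := pselect (exists u, P u /\ phi u != 0); last first.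
  exists 0 => u Pu; rewrite (ip0r ipH).
  by apply: contra_notP phi_eq0 => /eqP phi_u; exists u.
have S_u1 : S ((phi u0)^-1 *: u0).
  by split; [exact: subspaceZ | rewrite (linear_onZ P_sub phi_lin) // mulVf].
have [d [vs [d_lb vsS vs_min]]] :=
  minimizing_sequence (sqnorm_ge0 ipH) (ex_intro S _ S_u1).
have [v vs_cvg] : exists v, sqnorm_cvg vs v.
  apply: complete => e e0; have e4 : 0 < e / 4 by rewrite divr_gt0.
  have [K near_min] := vs_min _ e4; exists K => j k le_Kj le_Kk.
  have := sqnorm_sub_le_min d_lb (vsS j) (vsS k).
  have := near_min j le_Kj; have := near_min k le_Kk; lra.
exists ((sqnorm v)^-1%:C *: v).
exact: (limit_represents d_lb vsS vs_cvg vs_min phi_bd).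
Qed.
End RieszRepresentation.

Section InducedNorm.
Variable R : realType.
Local Notation C := (R[i]).
Variables (V : lmodType C) (ip : V -> V -> C).
Hypothesis ipH : inner_product ip.
Local Notation sqnorm := (sqnorm ip).

Lemma ip_norm_lt u (e : R) : 0 < e -> (ip_norm ip u < e%:C) = (sqnorm u < e ^+ 2).
Proof.
move=> e0; rewrite -(@ltr_pXn2r _ 2) ?nnegrE ?sqrtC_ge0 ?(ip_ge0 ipH) ?ler0c ?ltW //.
by rewrite sqrtCK (ip_selfE ipH) -rmorphXn ltcR.
Qed.

Lemma sqmod_le_of_norm_le (z c : C) u :
  0 <= c -> `|z| <= c * ip_norm ip u -> sqmod z <= complex.Re c ^+ 2 * sqnorm u.
Proof.
move=> c0 z_le; rewrite -lecR -sqr_normcE real_complexM.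
have -> : (complex.Re c ^+ 2)%:C = c ^+ 2.
  by rewrite [in RHS](ge0_complexE c0) rmorphXn.
rewrite -(ip_selfE ipH) -[ip u u]sqrtCK -exprMn ler_pXn2r ?nnegrE //.
by rewrite mulr_ge0 // sqrtC_ge0 (ip_ge0 ipH).
Qed.

End InducedNorm.

Lemma hilbert_space_sqnorm_complete (R : realType) (V : lmodType R[i])
    (ip : V -> V -> R[i]) :
  hilbert_space ip -> sqnorm_complete ip.
Proof.
move=> [ipH complete] s s_cauchy.
have [|l s_cvg] := complete s.
  move=> eps eps0; have eps_real := ge0_complexE (ltW eps0).
  have r0 : 0 < complex.Re eps by rewrite -ltcR -eps_real.
  have [K near] := s_cauchy _ (exprn_gt0 2 r0).
  by exists K => j k le_Kj le_Kk; rewrite eps_real (ip_norm_lt ipH) ?near.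
exists l => e e0; have sqrt_e0 : 0 < (Num.sqrt e)%:C by rewrite ltcR sqrtr_gt0.
have [K near] := s_cvg _ sqrt_e0.
by exists K => k le_Kk; rewrite -[e]sqr_sqrtr ?ltW // -(ip_norm_lt ipH) ?near // sqrtr_gt0.
Qed.

Lemma lin_operator_subspace (R : realType) (V : lmodType R[i]) (D : V -> Prop) T :
  lin_operator D T -> subspace D.
Proof. by case=> D0 [DC _]. Qed.

Lemma lin_operator_linear_on (R : realType) (V : lmodType R[i]) (ip : V -> V -> R[i])
    (D : V -> Prop) T x :
  inner_product ip -> lin_operator D T -> linear_on (fun u => ip (T u) x) D.
Proof. by move=> ipH [_ [_ T_lin]] a u w Du Dw; rewrite T_lin // (ip_linear_l ipH). Qed.

Theorem lemma9p1 (R : realType) (V : lmodType R[i]) (ip : V -> V -> R[i])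
  (D : V -> Prop) (T : V -> V) (n : nat) (g : 'I_n -> V) (x : V) :
  hilbert_space ip ->
  lin_operator D T ->
  densely_defined ip D ->
  symmetric_op ip D T ->
  (exists c : R[i], 0 <= c /\
     forall u : V, D u -> (forall j : 'I_n, ip u (g j) = 0) ->
       `|ip (T u) x| <= c * ip_norm ip u) ->
  adjoint_dom ip D T x.
Proof.
move=> hilb linT _ _ [c [c0 Tx_bd]]; have ipH := hilb.1.
have D_sub := lin_operator_subspace linT.
have phi_lin := lin_operator_linear_on x ipH linT.
have phi_bd_ker : bounded_on ip (fun u => ip (T u) x)
    (fun u => D u /\ forall h, h \in codom g -> ip u h = 0).
  exists (complex.Re c ^+ 2); split=> [|u [Du u_orth]]; first exact: sqr_ge0.
  by apply: sqmod_le_of_norm_le c0 (Tx_bd u Du _) => // j; apply/u_orth/codom_f.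
have phi_bd := bounded_on_ker_ips ipH D_sub phi_lin phi_bd_ker.
have [y y_rep] := riesz_representation ipH D_sub phi_lin
  (hilbert_space_sqnorm_complete hilb) phi_bd.
by exists y.
Qed.
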